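(* For every $n \ge 1$, the $\mathbb{Z}$-discriminating complexity of $\mathbb{Z}^n$ asymptotically dominates a polynomial of degree $n-1$, i.e. $(R \mapsto R^{n-1}) \preceq C_{\mathbb{Z}^n}^{\mathbb{Z}}$.
   Context: A homomorphism $\phi: G \to H$ discriminates a finite set $S\subseteq G-\{1\}$ if $1\notin\phi(S)$. For finite generating sets $X$ of $G$, $Y$ of $H$, $|\phi|_X^Y := \max_{x\in X}|\phi(x)|_Y$, and $C_{G,X}^{H,Y}(R) := \min\{|\phi|_X^Y : \phi \text{ discriminates } B_R(G,X)-\{1\}\}$, with $B_R(G,X)$ the closed word-metric ball of radius $R$. For $f,g:\mathbb{N}\to\mathbb{N}$, $f\preceq g$ means there is $K$ with $f(R)\le Kg(KR)+K$ for all $R$; the $\preceq$-class of $C_{G,X}^{H,Y}$ is independent of $X,Y$ and denoted $C_G^H$. *)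

From HB Require Import structures.
From mathcomp Require Import all_boot all_order all_algebra.
From Stdlib Require Import ClassicalEpsilon.
Set Implicit Arguments. Unset Strict Implicit. Unset Printing Implicit Defensive.
Import Order.TTheory GRing.Theory Num.Theory.
Local Open Scope ring_scope.

(* Least natural number satisfying P (classical); 0 if none exists. *)
Definition natmin (P : nat -> Prop) : nat :=
  match excluded_middle_informative (exists c, P c) with
  | left h =>
      @ex_minn (fun c => if excluded_middle_informative (P c) then true else false)
        (let (c, hc) := h in
         ex_intro _ c (match excluded_middle_informative (P c) as b
                             return ((if b then true else false) = true) with
                       | left _ => erefl true
                       | right hn => False_ind _ (hn hc) end))
  | right _ => 0%N
  end.

Definition is_hom (U V : zmodType) (f : U -> V) : Prop :=
  forall x y, f (x + y) = f x + f y.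

Definition wlen_le (V : zmodType) (X : seq V) (g : V) (k : nat) : Prop :=
  exists s : seq V, (size s <= k)%N /\
    all (fun y => (y \in X) || (- y \in X)) s /\ g = \sum_(y <- s) y.

Definition in_ball (V : zmodType) (X : seq V) (R : nat) (g : V) : Prop :=
  wlen_le X g R.

Definition discriminates_ball (U V : zmodType) (X : seq U) (R : nat) (f : U -> V) : Prop :=
  forall g, in_ball X R g -> g != 0 -> f g != 0.

(* C_{G,X}^{H,Y}(R) = min over discriminating homs phi of max_{x in X} |phi x|_Y,
   i.e. the least c such that some discriminating hom phi has |phi x|_Y <= c
   for all x in X. *)
Definition disc_complexity (U V : zmodType) (X : seq U) (Y : seq V) (R : nat) : nat :=
  natmin (fun c => exists f : U -> V, is_hom f /\ discriminates_ball X R f /\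
                     forall x, x \in X -> wlen_le Y (f x) c).

Definition preceq (f g : nat -> nat) : Prop :=
  exists K : nat, forall R : nat, (f R <= K * g (K * R) + K)%N.

Definition std_gens (n : nat) : seq 'rV[int]_n :=
  [seq delta_mx 0 i | i <- enum 'I_n].

From mathcomp Require Import all_boot all_order all_algebra.
From mathcomp Require Import zify.
From Stdlib Require Import ClassicalEpsilon.
Set Implicit Arguments. Unset Strict Implicit. Unset Printing Implicit Defensive.
Import Order.TTheory GRing.Theory Num.Theory.
Local Open Scope ring_scope.

(* If phi : Z^n -> Z discriminates the ball of radius 2nR and maps each
   generator into [-c, c], then it is injective on the box {0..R}^n, whose
   differences lie in that ball, and maps the box into [-cnR, cnR].  Counting
   gives (R+1)^n <= 2cnR + 1, hence R^(n-1) <= 2nc.  A discriminating phi exists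
   for every radius r (read the coordinates as digits in base r+1), so the
   complexity is attained and the bound applies to it. *)

Lemma natmin_spec (P : nat -> Prop) : (exists c, P c) -> P (natmin P).
Proof.
move=> exP; rewrite /natmin; case: excluded_middle_informative => [exP'|//].
by case: ex_minnP => m Pm _; move: Pm; case: excluded_middle_informative.
Qed.

Section Homomorphisms.

Variables (U V : zmodType) (f : U -> V).
Hypothesis hom_f : is_hom f.

Lemma hom0 : f 0 = 0.
Proof. by apply/(@addrI _ (f 0)); rewrite -hom_f !addr0. Qed.

Lemma homN x : f (- x) = - f x.
Proof. by apply/(@addrI _ (f x)); rewrite -hom_f !subrr hom0. Qed.

Lemma homB x y : f (x - y) = f x - f y.
Proof. by rewrite hom_f homN. Qed.

Lemma hom_sum (s : seq U) : f (\sum_(y <- s) y) = \sum_(y <- s) f y.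
Proof.
elim: s => [|a s IH]; first by rewrite !big_nil hom0.
by rewrite !big_cons hom_f IH.
Qed.

End Homomorphisms.

Section WordLength.

Variables (V : zmodType) (X : seq V).

Lemma wlen_le0 : wlen_le X 0 0.
Proof. by exists [::]; rewrite big_nil. Qed.

Lemma wlen_le_mono a k k' : (k <= k')%N -> wlen_le X a k -> wlen_le X a k'.
Proof. by move=> lekk' [s [les hs]]; exists s; split=> //; apply: leq_trans lekk'. Qed.

Lemma wlen_leD a b k1 k2 :
  wlen_le X a k1 -> wlen_le X b k2 -> wlen_le X (a + b) (k1 + k2).
Proof.
move=> [s [les [hs ->]]] [t [let_ [ht ->]]]; exists (s ++ t).
by rewrite size_cat leq_add // all_cat hs ht big_cat.
Qed.

Lemma wlen_leN a k : wlen_le X a k -> wlen_le X (- a) k.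
Proof.
move=> [s [les [hs ->]]]; exists (map -%R s).
rewrite size_map big_map -sumrN all_map; split=> //; split=> //.
by apply/allP => y /(allP hs) /=; rewrite opprK orbC.
Qed.

Lemma wlen_le_muln x m : x \in X -> wlen_le X (x *+ m) m.
Proof.
move=> Xx; elim: m => [|m IH]; first exact: wlen_le0.
rewrite mulrS -add1n; apply: wlen_leD IH.
by exists [:: x]; rewrite /= Xx big_seq1.
Qed.

Lemma wlen_le_sum n (F : 'I_n -> V) (k : 'I_n -> nat) :
  (forall i, wlen_le X (F i) (k i)) -> wlen_le X (\sum_i F i) (\sum_i k i)%N.
Proof.
move=> hF; elim/big_rec2: _ => [|i a b _]; first exact: wlen_le0.
exact: wlen_leD.
Qed.

Lemma norm_hom_wlen_le (f : V -> int) (c k : nat) g :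
  is_hom f -> (forall x, x \in X -> `|f x| <= c%:Z) ->
  wlen_le X g k -> `|f g| <= (c * k)%:Z.
Proof.
move=> hom_f fX [s [les [hs ->]]]; rewrite hom_sum //.
apply: (@le_trans _ _ (c * size s)%:Z); last by rewrite lez_nat leq_mul.
elim: s {les} hs => [|a s IH] /=; first by rewrite big_nil.
case/andP=> Xa hs; rewrite big_cons mulnS PoszD.
apply: le_trans (ler_normD _ _) (lerD _ (IH hs)).
by case/orP: Xa => [/fX //|/fX]; rewrite homN // normrN.
Qed.

End WordLength.

Lemma wlen_le_norm (z : int) : wlen_le [:: 1] z `|z|%N.
Proof.
have wlen_nat k : wlen_le [:: 1] k%:Z k by rewrite -natz; apply/wlen_le_muln/mem_head.
by case: z => k //; rewrite NegzE; apply/wlen_leN/wlen_nat.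
Qed.

Lemma norm_le_wlen_le (z : int) (c : nat) : wlen_le [:: 1] z c -> `|z| <= c%:Z.
Proof.
move/(@norm_hom_wlen_le _ _ id 1); rewrite mul1n; apply=> // x.
by rewrite inE => /eqP ->.
Qed.

Lemma std_gens_mem n (i : 'I_n) : delta_mx 0 i \in std_gens n.
Proof. by apply/mapP; exists i; rewrite ?mem_enum. Qed.

Lemma coord_wlen_le n (g : 'rV[int]_n) k i :
  wlen_le (std_gens n) g k -> `|g 0 i| <= k%:Z.
Proof.
move/(@norm_hom_wlen_le _ _ (fun g : 'rV[int]_n => g 0 i) 1); rewrite mul1n.
apply=> [x y|_ /mapP [j _ ->]]; rewrite !mxE //.
by case: (i == j).
Qed.

Section DigitExpansion.

Variable B : int.

Definition digits_hom n (g : 'rV[int]_n) : int := \sum_(i < n) g 0 i * B ^+ i.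

Lemma digits_hom_is_hom n : is_hom (@digits_hom n).
Proof.
move=> x y; rewrite -big_split; apply: eq_bigr => i _.
by rewrite !mxE mulrDl.
Qed.

Lemma digits_eq0 n (a : 'I_n -> int) :
  (forall i, `|a i| < B) -> \sum_(i < n) a i * B ^+ i = 0 -> forall i, a i = 0.
Proof.
elim: n a => [|n IH] a lt_aB; first by move=> _ [].
rewrite big_ord_recl expr0 mulr1.
under eq_bigr do rewrite exprS mulrCA.
rewrite -mulr_sumr => /eqP; rewrite addr_eq0 => /eqP a0E.
have tail0 : \sum_(i < n) a (lift ord0 i) * B ^+ i = 0.
  apply/eqP; apply: contraTT (lt_aB ord0) => tail_neq0.
  rewrite -leNgt a0E normrN normrM (le_trans (ler_norm B)) //.
  by rewrite ler_peMr // -gtz0_ge1 normr_gt0.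
have {}IH := IH _ (fun i => lt_aB _) tail0.
by move=> i; case: (unliftP ord0 i) => [j ->|->] //; rewrite a0E tail0 mulr0 oppr0.
Qed.

End DigitExpansion.

Lemma digits_hom_discriminates n r :
  discriminates_ball (std_gens n) r (@digits_hom r.+1%:Z n).
Proof.
move=> g g_ball; apply: contraNN => /eqP /digits_eq0 g0.
apply/eqP/matrixP => a i; rewrite (ord1 a) mxE; apply: g0 => j.
by apply: le_lt_trans (coord_wlen_le j g_ball) _; rewrite ltz_nat.
Qed.

Lemma disc_complexity_spec n r :
  exists f : 'rV[int]_n -> int, [/\ is_hom f, discriminates_ball (std_gens n) r f &
    forall x, x \in std_gens n -> `|f x| <= (disc_complexity (std_gens n) [:: 1 : int] r)%:Z].
Proof.
have [|f [hom_f [disc_f fX]]] := natmin_spec (P := fun c => exists f : 'rV[int]_n -> int,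
  is_hom f /\ discriminates_ball (std_gens n) r f /\
  forall x, x \in std_gens n -> wlen_le [:: 1] (f x) c).
  pose f := @digits_hom r.+1%:Z n.
  exists (\max_(y <- std_gens n) `|f y|)%N, f.
  split; [exact: digits_hom_is_hom | split; first exact: digits_hom_discriminates].
  move=> x Xx; apply: wlen_le_mono (wlen_le_norm (f x)).
  exact: (@leq_bigmax_seq _ _ predT (fun y => `|f y|%N)).
by exists f; split=> // x /fX /norm_le_wlen_le.
Qed.

Section Box.

Variables n R : nat.

Definition box_vec (v : {ffun 'I_n -> 'I_R.+1}) : 'rV[int]_n := \row_j (v j)%:Z.

Lemma box_vec_inj : injective box_vec.
Proof.
move=> v w /matrixP eq_vw; apply/ffunP => i; apply/val_inj.
by have := eq_vw 0 i; rewrite !mxE => -[].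
Qed.

Lemma box_vec_wlen_le v : wlen_le (std_gens n) (box_vec v) (n * R).
Proof.
have -> : box_vec v = \sum_(i < n) delta_mx 0 i *+ v i.
  apply/matrixP => a j; rewrite summxE mxE (bigD1 j) //= big1 => [|i neq_ij];
    rewrite -scaler_nat !mxE (ord1 a) /=.
    by rewrite eqxx mulr1 addr0 natz.
  by rewrite eq_sym (negbTE neq_ij) mulr0.
apply: (@wlen_le_mono _ _ _ (\sum_(i < n) v i)%N).
  by rewrite -[in (_ * _)%N](card_ord n) -sum_nat_const leq_sum // => i; rewrite -ltnS.
by apply: wlen_le_sum => i; apply/wlen_le_muln/std_gens_mem.
Qed.

Lemma box_card_le (f : 'rV[int]_n -> int) (c : nat) :
  is_hom f -> discriminates_ball (std_gens n) (2 * (n * R)) f ->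
  (forall x, x \in std_gens n -> `|f x| <= c%:Z) ->
  (R.+1 ^ n <= (2 * (c * (n * R))).+1)%N.
Proof.
move=> hom_f disc_f fX; set M := (c * (n * R))%N.
have f_box v : `|f (box_vec v)| <= M%:Z.
  exact: norm_hom_wlen_le fX (box_vec_wlen_le v).
have shift_lt v : (absz (f (box_vec v) + M%:Z)%R < (2 * M).+1)%N.
  by have := f_box v; lia.
pose F v : 'I_(2 * M).+1 := inord (absz (f (box_vec v) + M%:Z)).
have F_inj : injective F.
  move=> v w /(congr1 val); rewrite /= !inordK // => eqF.
  have {eqF} eq_fvw : f (box_vec v) = f (box_vec w).
    by have := f_box v; have := f_box w; lia.
  apply/box_vec_inj/eqP; rewrite -subr_eq0; apply: contraTT isT => neq_vw.
  suff : f (box_vec v - box_vec w) != 0 by rewrite homB // eq_fvw subrr.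
  apply: disc_f neq_vw; rewrite mul2n -addnn.
  by apply: wlen_leD; [|apply: wlen_leN]; apply: box_vec_wlen_le.
by have := leq_card F F_inj; rewrite card_ffun !card_ord.
Qed.

End Box.

Theorem mainTheorem9 (n : nat) (hn : (1 <= n)%N) :
  preceq (fun R => (R ^ (n - 1))%N)
         (disc_complexity (std_gens n) [:: (1%R : int)]).
Proof.
exists (2 * n)%N => R.
have [f [hom_f disc_f fX]] := disc_complexity_spec n (2 * n * R).
rewrite -mulnA in disc_f.
have := box_card_le hom_f disc_f fX; move: (disc_complexity _ _ _) => c card_le.
have pow_lt : (R ^ n < R.+1 ^ n)%N by rewrite ltn_exp2r.
have [->|R_gt0] := posnP R.
  by case: (n - 1)%N => [|k]; rewrite ?expnS ?mul0n; lia.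
have powE : (R ^ n = R * R ^ (n - 1))%N by rewrite -expnS subn1 prednK.
nia.
Qed.
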